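(* Let $n\ge2$ be even and $x\in C_1^n$. For every $1\le i\le n-2$, the simple reflections $s_i$ and $s_{i+1}$ do not both belong to $\tau_{\mathbf m}(x)$.
   Context: $s_i=(i,i+1)$; permutations compose right to left. $\mathcal F_n$ is the set of fixed-point-free involutions of $S_n$, conjugation action, height $\ell/2$; Bruhat order: weakest partial order with $z\le tzt$ for transpositions $t$ with $\ell(z)\le\ell(tzt)$; $\tau_{\mathbf m}(z)=\{s_i:s_izs_i\le z\}$. $\mu_{\mathbf m}(x,y)$ is the coefficient of $v^{-1}$ in $m_{x,y}$, where $\underline M_y=\sum_xm_{x,y}M_x$ is the canonical basis (bar-invariant, $\underline M_y\in M_y+\sum_{x<y}v^{-1}\mathbb Z[v^{-1}]M_x$, bar involution fixing $M_{s_1s_3\cdots s_{n-1}}$) of the $\mathcal H(S_n)$-module with basis $M_z$, $H_sM_z=M_{szs}$ if $\ell(szs)>\ell(z)$, $M_{szs}+(v-v^{-1})M_z$ if $\ell(szs)<\ell(z)$, $vM_z$ if $szs=z$. $\omega_{\mathbf m}(x\to y)=\mu_{\mathbf m}(x,y)+\mu_{\mathbf m}(y,x)$ if $\tau_{\mathbf m}(x)\not\subseteq\tau_{\mathbf m}(y)$, else $0$; a bidirected edge joins $x,y$ if both $\omega_{\mathbf m}(x\to y),\omega_{\mathbf m}(y\to x)\ne0$; molecules are connected components of the graph of bidirected edges. $C_1^n$ is the molecule containing $s_1s_3\cdots s_{n-1}$. *)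

From HB Require Import structures.
From mathcomp Require Import all_boot all_order all_algebra all_fingroup.
From mathcomp Require Import finmap.

Set Implicit Arguments.
Unset Strict Implicit.
Unset Printing Implicit Defensive.

Import GRing.Theory.
Local Open Scope fset_scope.

(* Laurent polynomials Z[v, v^-1], represented by their finitely        *)
(* supported coefficient function k |-> (coefficient of v^k).           *)
Definition laurent := {fsfun int -> int with 0%R}.

Definition lzero : laurent := [fsfun for fun _ => 0%R].
(* c v^d *)
Definition lmono (c : int) (d : int) : laurent :=
  [fsfun k in [fset d] => if k == d then c else 0%R].
Definition lone : laurent := lmono 1 0.
Definition ladd (f g : laurent) : laurent :=
  [fsfun k in finsupp f `|` finsupp g => (f k + g k)%R].
Definition lopp (f : laurent) : laurent :=
  [fsfun k in finsupp f => (- f k)%R].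
Definition lmul (f g : laurent) : laurent :=
  [fsfun k in [fset (a + b)%R | a in finsupp f, b in finsupp g] =>
     (\sum_(a <- finsupp f) f a * g (k - a))%R].
(* the ring involution v |-> v^-1 *)
Definition lbar (f : laurent) : laurent :=
  [fsfun k in [fset (- a)%R | a in finsupp f] => f (- k)%R].
Definition vmvinv : laurent := ladd (lmono 1 1) (lmono (-1) (-1)).

(* Permutations of {1..n} (encoded as 'I_n, value k <-> k+1).           *)

(* simple reflection s_i = (i, i+1), meaningful for 1 <= i <= n-1 *)
Definition sref (n i : nat) : 'S_n :=
  match n as n0 return 'S_n0 with
  | 0 => 1%g
  | m.+1 => tperm (@inord m i.-1) (@inord m i)
  end.

Definition ell n (w : 'S_n) : nat :=
  #|[set p : 'I_n * 'I_n | (p.1 < p.2)%N && (w p.2 < w p.1)%N]|.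

Definition is_transposition n (t : 'S_n) : bool :=
  [exists i : 'I_n, exists j : 'I_n, (i != j) && (t == tperm i j)].

Definition fpf_invol n (z : 'S_n) : bool :=
  ((z * z)%g == 1%g) && [forall k : 'I_n, z k != k].

Definition F n := {z : 'S_n | fpf_invol z}.

(* conjugation of z in F_n by a permutation s (s z s^-1 is again in F_n
   when s is an involution; insubd only supplies a default value) *)
Definition conjF n (s : 'S_n) (z : F n) : F n :=
  insubd z (s * val z * s^-1)%g.

Definition z0perm n : 'S_n := (\prod_(i < n | odd i) sref n i)%g.

(* Bruhat order on F_n: the weakest partial order with z <= tzt for     *)
(* transpositions t with ell(z) <= ell(tzt), i.e. the reflexive          *)
(* transitive closure of these covering steps.                          *)
Definition bruhat_step n (a b : F n) : bool :=
  [exists t : 'S_n, [&& is_transposition t,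
                        val b == (t * val a * t)%g & ell (val a) <= ell (val b)]].

Definition bruhat_le n (a b : F n) : bool := connect (@bruhat_step n) a b.
Definition bruhat_lt n (a b : F n) : bool := (a != b) && bruhat_le a b.

(* tau_m(z) as a set of indices i in {1..n-1}: s_i z s_i <= z *)
Definition tau n (z : F n) (i : nat) : bool :=
  [&& 0 < i, i < n & bruhat_le (conjF (sref n i) z) z].

Definition tau_subset n (x y : F n) : bool :=
  [forall i : 'I_n, tau x i ==> tau y i].

(* The H(S_n)-module with Z[v,v^-1]-basis (M_z)_{z in F_n}; an element   *)
(* is its coordinate function z |-> coefficient of M_z.                  *)
Definition module n := F n -> laurent.

Definition Mbasis n (y : F n) : module n :=
  fun w => if w == y then lone else lzero.

Definition madd n (a b : module n) : module n := fun w => ladd (a w) (b w).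
Definition mscale n (f : laurent) (a : module n) : module n :=
  fun w => lmul f (a w).

(* action of H_s on the module, extended Z[v,v^-1]-linearly from
   H_s M_z = M_szs                  if ell(szs) > ell(z),
             M_szs + (v-v^-1) M_z   if ell(szs) < ell(z),
             v M_z                  if szs = z. *)
Definition Hact n (s : 'S_n) (m : module n) : module n :=
  fun w =>
    let u := conjF s w in
    if u == w then lmul (lmono 1 1) (m w)
    else if ell (val u) < ell (val w) then ladd (m u) (lmul vmvinv (m w))
    else m u.

(* action of H_s^-1 = H_s - (v - v^-1) *)
Definition Hinvact n (s : 'S_n) (m : module n) : module n :=
  madd (Hact s m) (mscale (lopp vmvinv) m).

Definition is_bar_involution n (B : module n -> module n) : Prop :=
  [/\ forall a b, B (madd a b) = madd (B a) (B b),
      forall f a, B (mscale f a) = mscale (lbar f) (B a),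
      forall i a, (0 < i < n)%N ->
         B (Hact (sref n i) a) = Hinvact (sref n i) (B a)
    & forall z : F n, val z = z0perm n -> B (Mbasis z) = Mbasis z].

(* C y is the canonical basis element \underline M_y, with coordinates
   m_{x,y} = C y x *)
Definition is_canonical_basis n (B : module n -> module n)
    (C : F n -> module n) : Prop :=
  forall y : F n,
    [/\ B (C y) = C y,
        C y y = lone
      & forall x : F n, x != y ->
          (bruhat_lt x y /\ forall k : int, (0 <= k)%R -> C y x k = 0%R)
          \/ C y x = lzero].

Definition mu n (C : F n -> module n) (x y : F n) : int := C y x (-1)%R.

Definition omega n (C : F n -> module n) (x y : F n) : int :=
  if ~~ tau_subset x y then (mu C x y + mu C y x)%R else 0%R.

Definition bidirected n (C : F n -> module n) (x y : F n) : bool :=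
  (omega C x y != 0%R) && (omega C y x != 0%R).

Definition in_C1 n (C : F n -> module n) (x : F n) : Prop :=
  exists z : F n, val z = z0perm n /\ connect (@bidirected n C) z x.

(* Read [z] in F_n as a perfect matching of {1..n}.  Then [s_i] lies in
   [tau_m(z)] exactly when [i] is a descent, [z(i+1) < z(i)], and we call [z]
   non-nesting when no arc of the matching lies inside another.  The element
   [s_1 s_3 ... s_(n-1)] is non-nesting, and a non-nesting matching has no two
   consecutive descents, so it suffices that bidirected edges preserve
   non-nesting.

   If [mu_m(x, y) <> 0] and [s] lies in [tau_m(y)] but not in [tau_m(x)], then
   [y = s x s]: the element [(H_s - v) \underline M_y] is bar invariant, and at
   an element of maximal length its coefficient is symmetric under
   [v |-> v^-1] yet has no terms of nonnegative degree, so it vanishes.  Its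
   coefficient at [x] then equates the constant term of [m_(sxs, y)] with
   [mu_m(x, y)], which forces [sxs = y].  So the endpoints of a bidirected edge
   differ by conjugation by a simple reflection, and a case analysis on the two
   swapped arcs, using that neither [tau_m] contains the other, shows that
   non-nesting passes from one endpoint to the other. *)

From mathcomp Require Import all_boot all_order all_algebra all_fingroup.
From mathcomp Require Import finmap zify ring.
From Stdlib Require Import FunctionalExtensionality.

Set Implicit Arguments.
Unset Strict Implicit.
Unset Printing Implicit Defensive.
Import GRing.Theory Order.POrderTheory Num.Theory.
Local Open Scope fset_scope.

(** * Coefficients of Laurent polynomials *)

Section LaurentCoefficients.
Local Open Scope ring_scope.
Implicit Types (f g : laurent) (c d k : int).

Lemma lzeroE k : lzero k = 0.
Proof. by rewrite /lzero fsfunE. Qed.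

Lemma lmonoE c d k : lmono c d k = if k == d then c else 0.
Proof. by rewrite /lmono fsfunE inE; case: (k == d). Qed.

Lemma loneE k : lone k = (k == 0)%:R.
Proof. by rewrite /lone lmonoE; case: (k == 0). Qed.

Lemma laddE f g k : ladd f g k = f k + g k.
Proof.
rewrite /ladd fsfunE inE; case: ifP => //.
by move/negbT; rewrite negb_or !memNfinsupp => /andP[/eqP -> /eqP ->].
Qed.

Lemma loppE f k : lopp f k = - f k.
Proof.
rewrite /lopp fsfunE; case: ifP => //.
by move/negbT; rewrite memNfinsupp => /eqP ->; rewrite oppr0.
Qed.

Lemma lbarE f k : lbar f k = f (- k).
Proof.
rewrite /lbar fsfunE; case: ifP => // Nk.
apply/esym/eqP; rewrite -memNfinsupp; apply: contraFN Nk => fk.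
by apply/imfsetP; exists (- k); rewrite ?opprK.
Qed.

Lemma lmulE f g k : lmul f g k = \sum_(a <- finsupp f) f a * g (k - a).
Proof.
rewrite /lmul fsfunE; case: ifP => // Nk.
apply/esym/big1_seq => a /andP[_ fa].
suff -> : g (k - a) = 0 by rewrite mulr0.
apply/eqP; rewrite -memNfinsupp; apply: contraFN Nk => gb.
by apply/imfset2P; exists a => //; exists (k - a); rewrite // addrC subrK.
Qed.

Lemma lmulE_fsubset f g k S : finsupp f `<=` S ->
  lmul f g k = \sum_(a <- S) f a * g (k - a).
Proof.
move=> fS; rewrite lmulE; apply: big_fset_incl => // a _ fa.
by rewrite (fsfun_dflt fa) mul0r.
Qed.

Lemma finsupp_lmono c d : finsupp (lmono c d) `<=` [fset d].
Proof.
apply/fsubsetP => a; rewrite mem_finsupp lmonoE inE.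
by case: (a == d); rewrite ?eqxx.
Qed.

Lemma lmul_lmonoE c d g k : lmul (lmono c d) g k = c * g (k - d).
Proof.
rewrite (lmulE_fsubset _ _ (finsupp_lmono c d)) big_seq_fset1.
by rewrite lmonoE eqxx.
Qed.

Lemma lmul0E g k : lmul lzero g k = 0.
Proof. by rewrite lmulE big1_seq // => a _; rewrite lzeroE mul0r. Qed.

Lemma lmulr0E f k : lmul f lzero k = 0.
Proof. by rewrite lmulE big1_seq // => a _; rewrite lzeroE mulr0. Qed.

Lemma lmulr1E f k : lmul f lone k = f k.
Proof.
have supp : finsupp f `<=` k |` (finsupp f `\ k).
  by apply/fsubsetP => a fa; rewrite !inE; case: (a == k); rewrite //= fa.
rewrite (lmulE_fsubset _ _ supp) big_fsetU1 ?fsetD11 //= subrr loneE mulr1.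
rewrite big1_seq ?addr0 // => a /andP[_ /fsetD1P[ak _]].
by rewrite loneE subr_eq0 eq_sym (negbTE ak) mulr0.
Qed.

Lemma lmul_loppE f g k : lmul (lopp f) g k = - lmul f g k.
Proof.
rewrite !lmulE -sumrN.
have -> : finsupp (lopp f) = finsupp f.
  by apply/fsetP => a; rewrite !mem_finsupp loppE oppr_eq0.
by apply: eq_bigr => a _; rewrite loppE mulNr.
Qed.

Lemma lmul_vmvinvE g k : lmul vmvinv g k = g (k - 1) - g (k + 1).
Proof.
have supp : finsupp vmvinv `<=` [fset 1; -1].
  apply/fsubsetP => a; rewrite mem_finsupp laddE !lmonoE !inE.
  by case: (a == 1); case: (a == -1); rewrite ?eqxx ?orbT.
rewrite (lmulE_fsubset _ _ supp) big_fsetU1 ?inE // big_seq_fset1.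
by rewrite !laddE !lmonoE /= addr0 add0r mul1r mulN1r opprK.
Qed.

Lemma lbar0 : lbar lzero = lzero.
Proof. by apply/fsfunP => k; rewrite lbarE !lzeroE. Qed.

Lemma lbar_lopp_lmono c d : lbar (lopp (lmono c d)) = lopp (lmono c (- d)).
Proof. by apply/fsfunP => k; rewrite lbarE !loppE !lmonoE -eqr_oppLR. Qed.

End LaurentCoefficients.

(** * Non-nesting matchings *)

Definition adjswap (c k : nat) : nat :=
  if k == c then c.+1 else if k == c.+1 then c else k.

Lemma adjswap_spec c k : (k = c /\ adjswap c k = c.+1) \/
  (k = c.+1 /\ adjswap c k = c) \/ (k <> c /\ k <> c.+1 /\ adjswap c k = k).
Proof.
rewrite /adjswap; case: eqP => [->|kc]; first by left.
by case: eqP => [->|kc1]; [right; left | right; right].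
Qed.

Lemma adjswapK c : involutive (adjswap c).
Proof. by move=> k; have := adjswap_spec c k; have := adjswap_spec c (adjswap c k); lia. Qed.

Lemma adjswapL c : adjswap c c = c.+1.
Proof. by rewrite /adjswap eqxx. Qed.

Lemma adjswapR c : adjswap c c.+1 = c.
Proof. by rewrite /adjswap eqxx; case: eqP => //; lia. Qed.

Lemma adjswap_id c k : k <> c -> k <> c.+1 -> adjswap c k = k.
Proof. by have := adjswap_spec c k; lia. Qed.

Lemma adjswap_mono c a b : a < b -> ~~ ((a == c) && (b == c.+1)) ->
  adjswap c a < adjswap c b.
Proof. by have := adjswap_spec c a; have := adjswap_spec c b; lia. Qed.

Definition nonnesting (n : nat) (f : nat -> nat) : Prop :=
  forall p q, q < n -> p < q -> q < f q -> f q < f p -> False.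

Lemma invol_inj n (f : nat -> nat) a b : (forall k, k < n -> f (f k) = k) ->
  a < n -> b < n -> f a = f b -> a = b.
Proof. by move=> fK an bn E; rewrite -(fK a an) E fK. Qed.

Section AdjacentSwap.
Variables (n c : nat).
Hypothesis cn : c.+1 < n.

Lemma adjswap_lt k : k < n -> adjswap c k < n.
Proof. by have := adjswap_spec c k; lia. Qed.

Lemma adj_trichotomy (f : nat -> nat) : (forall k, k < n -> f (f k) = k) ->
  f c < f c.+1 \/ f c = c.+1 \/ (f c.+1 < f c /\ f c <> c.+1).
Proof. by move=> fK; have := @invol_inj n f c c.+1 fK (ltnW cn) cn; lia. Qed.

Lemma adjswap_conj_fixed (f : nat -> nat) :
  (forall k, k < n -> f (f k) = k) -> (forall k, k < n -> f k < n) ->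
  f c = c.+1 -> forall k, k < n -> adjswap c (f (adjswap c k)) = f k.
Proof.
move=> fK f_lt fc k kn.
have fc1 : f c.+1 = c by rewrite -fc fK //; lia.
have [[-> ->]|[[-> ->]|[kc [kc1 ->]]]] := adjswap_spec c k.
- by rewrite fc1 adjswapL fc.
- by rewrite fc adjswapR.
- apply: adjswap_id => E.
    by apply: kc1; apply: (invol_inj fK kn cn); rewrite E fc1.
  by apply: kc; apply: (invol_inj fK kn (ltnW cn)); rewrite E fc.
Qed.

Lemma adjswap_conj_descent (f : nat -> nat) :
  (forall k, k < n -> f (f k) = k) -> (forall k, k < n -> f k <> k) ->
  f c.+1 < f c -> f c <> c.+1 ->
  adjswap c (f (adjswap c c)) < adjswap c (f (adjswap c c.+1)).
Proof.
move=> fK f_neq dc nfix; rewrite adjswapL adjswapR.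
have fc1 : f c.+1 = c -> f c = c.+1 by move=> E; rewrite -{1}E fK.
have := f_neq _ (ltnW cn); have := f_neq _ cn.
by have := adjswap_spec c (f c); have := adjswap_spec c (f c.+1); lia.
Qed.

(* The three disjuncts are the cases where an inequality of the nesting is
   [c < c.+1], the only one that [adjswap c] reverses. *)
Lemma nesting_adjswap_conj (f h : nat -> nat) :
  (forall k, k < n -> h k = adjswap c (f (adjswap c k))) ->
  nonnesting n f -> forall p q, q < n -> p < q -> q < h q -> h q < h p ->
  [|| (p == c) && (q == c.+1), (q == c) && (h q == c.+1)
    | (h q == c) && (h p == c.+1)].
Proof.
move=> hf nf p q qn pq qhq hqp; apply/negPn/negP; rewrite !negb_or => /and3P[N1 N2 N3].
have Eq : f (adjswap c q) = adjswap c (h q) by rewrite hf // adjswapK.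
have Ep : f (adjswap c p) = adjswap c (h p) by rewrite hf ?adjswapK //; lia.
apply: (nf (adjswap c p) (adjswap c q)); rewrite ?Eq ?Ep ?adjswap_lt //;
  exact: adjswap_mono.
Qed.

Lemma nonnesting_adjswap_conj_ascent (f h : nat -> nat) :
  (forall k, k < n -> h k = adjswap c (f (adjswap c k))) ->
  (forall k, k < n -> f (f k) = k) ->
  f c < f c.+1 -> nonnesting n h -> nonnesting n f.
Proof.
move=> hf fK asc nh p q qn pq qfq fqp.
have fh k : k < n -> f k = adjswap c (h (adjswap c k)).
  by move=> kn; rewrite hf ?adjswap_lt // !adjswapK.
case/or3P: (nesting_adjswap_conj fh nh qn pq qfq fqp) => /andP[/eqP E1 /eqP E2].
- by move: fqp; rewrite E1 E2; lia.
- by subst q; have := fK c (ltnW cn); rewrite E2; lia.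
- by have := fK q qn; have := fK p (ltn_trans pq qn); rewrite E1 E2; lia.
Qed.

Section ConjugateByAscent.
Variables (f h : nat -> nat).
Hypothesis hf : forall k, k < n -> h k = adjswap c (f (adjswap c k)).
Hypothesis fK : forall k, k < n -> f (f k) = k.
Hypothesis f_lt : forall k, k < n -> f k < n.
Hypothesis f_neq : forall k, k < n -> f k <> k.
Hypothesis asc : f c < f c.+1.
Hypothesis nf : nonnesting n f.

Lemma ascent_partners : [/\ f c <> c, f c <> c.+1, f c.+1 <> c & f c.+1 <> c.+1].
Proof.
have c0 : c < n by lia.
have fc := f_neq c0; have fc1 := f_neq cn; have ffc := fK c0; have ffc1 := fK cn.
split=> // E.
- by move: ffc; rewrite E; lia.
- by move: ffc1; rewrite E; lia.
Qed.

Lemma conj_ascentE : h c = f c.+1 /\ h c.+1 = f c.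
Proof.
have [? ? ? ?] := ascent_partners.
by rewrite !hf ?adjswapL ?adjswapR ?adjswap_id //; lia.
Qed.

Lemma conj_ascent_lt k : k < n -> h k < n.
Proof. by move=> kn; rewrite hf //; apply/adjswap_lt/f_lt/adjswap_lt. Qed.

Lemma conj_ascentK k : k < n -> h (h k) = k.
Proof.
move=> kn; rewrite hf ?conj_ascent_lt // hf // adjswapK fK ?adjswap_lt //.
by rewrite adjswapK.
Qed.

Lemma nonnesting_conj_noncrossing : f c < c -> c.+1 < f c.+1 -> nonnesting n h.
Proof.
move=> fc fc1 p q qn pq qhq hqp.
have [hc hc1] := conj_ascentE; have [_ _ _ fc1_neq] := ascent_partners.
case/or3P: (nesting_adjswap_conj hf nf qn pq qhq hqp) => /andP[/eqP E1 /eqP E2].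
- by move: qhq; rewrite E2 hc1; lia.
- by subst q; apply: fc1_neq; rewrite -hc.
- by have := conj_ascentK qn; rewrite E1 hc; lia.
Qed.

Section DescentOfConjugate.
Variable e : nat.
Hypothesis en : e.+1 < n.
Hypothesis de : f e.+1 < f e.
Hypothesis ae : h e < h e.+1.

Lemma descent_near_ascent : e.+1 < c \/ c.+1 < e -> False.
Proof.
move=> far.
have he : h e = adjswap c (f e) by rewrite hf ?(@adjswap_id c e); lia.
have he1 : h e.+1 = adjswap c (f e.+1) by rewrite hf ?(@adjswap_id c e.+1); lia.
move: ae; rewrite he he1 => ae'.
have [/andP[/eqP E1 /eqP E2]|N] := boolP ((f e.+1 == c) && (f e == c.+1)).
  by have := fK (ltnW en); have := fK en; rewrite E1 E2; lia.
by have := adjswap_mono de N; lia.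
Qed.

Lemma crossing_right_descent_below : c.+1 < f c -> e.+1 = c -> False.
Proof. by move=> fc ec; apply: (nf (p := e) (q := c)); move: de; rewrite ec; lia. Qed.

Lemma crossing_right_descent_above : c.+1 < f c -> e = c.+1 -> False.
Proof.
move=> fc ec; subst e.
have he1 : h c.+2 = adjswap c (f c.+2) by rewrite hf ?(@adjswap_id c c.+2); lia.
move: ae; rewrite (proj2 conj_ascentE) he1 => ae'.
have nest := nf (p := c.+1) (q := c.+2) en; have f2 := f_neq en.
have [lt|[E|E]] : f c.+2 < c \/ f c.+2 = c \/ f c.+2 = c.+1 by lia.
- by move: ae'; rewrite adjswap_id //; lia.
- by have := fK en; move: ae'; rewrite E adjswapL; lia.
- by have := fK en; rewrite E; lia.
Qed.

Lemma crossing_left_descent_below : f c.+1 < c -> e.+1 = c -> False.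
Proof.
move=> fc1 ec.
have he : h e = adjswap c (f e) by rewrite hf ?(@adjswap_id c e); lia.
move: ae de; rewrite ec (proj1 conj_ascentE) he => ae' de'.
have ffe := fK (ltnW en); have ffc := fK (ltnW cn).
have := nf (p := f c) (q := f e) (f_lt (ltnW en)); rewrite ffe ffc => nest.
have fe := f_neq (ltnW en).
have [E|[E|gt]] : f e = c \/ f e = c.+1 \/ c.+1 < f e by lia.
- by move: ffe; rewrite E; lia.
- by move: ae'; rewrite E adjswapR; lia.
- by move: ae'; rewrite adjswap_id; lia.
Qed.

Lemma crossing_left_descent_above : f c.+1 < c -> e = c.+1 -> False.
Proof.
move=> fc1 ec; subst e.
apply: (nf (p := f c.+2) (q := f c.+1) (f_lt cn) de); rewrite !fK //; lia.
Qed.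

(* If the arcs at [c] and [c.+1] cross, [h] may nest, but then no descent of
   [f] is an ascent of [h]. *)
Lemma nonnesting_conj_ascent : nonnesting n h.
Proof.
have [? ? ? ?] := ascent_partners.
have e_neq_c : e != c by apply/eqP => ec; move: de; rewrite ec; lia.
have e_cases : e.+1 = c \/ e = c.+1 \/ e.+1 < c \/ c.+1 < e by lia.
have [[fc fc1]|[fc|fc1]] : (f c < c /\ c.+1 < f c.+1) \/ c.+1 < f c \/ f c.+1 < c by lia.
- exact: nonnesting_conj_noncrossing.
- case: e_cases => [|[|]] ?; exfalso.
  + exact: crossing_right_descent_below.
  + exact: crossing_right_descent_above.
  + exact: descent_near_ascent.
- case: e_cases => [|[|]] ?; exfalso.
  + exact: crossing_left_descent_below.
  + exact: crossing_left_descent_above.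
  + exact: descent_near_ascent.
Qed.

End DescentOfConjugate.
End ConjugateByAscent.
End AdjacentSwap.

Definition z0fun (k : nat) : nat := if odd k then k.-1 else k.+1.

Lemma z0fun_spec k :
  (z0fun k = k.+1 /\ ~~ odd k) \/ (z0fun k = k.-1 /\ odd k /\ 0 < k).
Proof. by rewrite /z0fun; case: (boolP (odd k)) => ok; [right; case: k ok | left]. Qed.

Lemma nonnesting_z0fun n : nonnesting n z0fun.
Proof. by move=> p q qn pq *; have := z0fun_spec p; have := z0fun_spec q; lia. Qed.

Section FixedPointFreeInvolution.
Variables (n : nat) (f : nat -> nat).
Hypothesis fK : forall k, k < n -> f (f k) = k.
Hypothesis f_lt : forall k, k < n -> f k < n.
Hypothesis f_neq : forall k, k < n -> f k <> k.

(* Induction on the prefix [0, 2m): the partner of [2m] lies to its right, and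
   it cannot lie beyond [2m + 1], as the position just before it would then be
   a descent. *)
Lemma eq_z0fun_no_descent :
  (forall c, c.+1 < n -> f c < f c.+1 \/ f c = c.+1) ->
  forall k, k < n -> f k = z0fun k.
Proof.
move=> asc.
suff prefix m j : j < m.*2 -> j < n -> f j = z0fun j.
  by move=> k kn; apply: (prefix k.+1) => //; rewrite -addnn; lia.
elim: m j => [//|m IH] j jm jn.
have f2m : m.*2 < n -> f m.*2 = (m.*2).+1.
  move=> mn; set p := f m.*2.
  have pn : p < n by apply: f_lt.
  have fp : f p = m.*2 by apply: fK.
  have p_ge : ~ p < m.*2.
    by move=> pl; have := IH p pl pn; rewrite fp; have := z0fun_spec p; rewrite -addnn; lia.
  have [pl|pg|//] := ltngtP p (m.*2).+1; first by have := f_neq mn; lia.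
  have qn : p.-1.+1 < n by lia.
  have Ep : p.-1.+1 = p by lia.
  have fq := fK (ltnW qn).
  case: (asc _ qn) => [|eq].
    rewrite Ep fp => lt; have := IH (f p.-1) lt (f_lt (ltnW qn)); rewrite fq.
    by have := z0fun_spec (f p.-1); rewrite -addnn; lia.
  by move: fq; rewrite Ep in eq; rewrite eq fp -addnn; lia.
have [jl|jl] : j < m.*2 \/ m.*2 <= j by lia.
  exact: IH.
have mn : m.*2 < n by lia.
have [->|->] : j = m.*2 \/ j = (m.*2).+1 by rewrite doubleS in jm; lia.
  by rewrite f2m // /z0fun odd_double.
by rewrite -(f2m mn) fK // f2m // /z0fun /= odd_double.
Qed.

Hypothesis nf : nonnesting n f.

Lemma nonnesting_descent c : c.+1 < n -> f c.+1 < f c -> c < f c /\ f c.+1 < c.+1.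
Proof.
move=> cn dc.
have := nf (p := f c.+1) (q := f c) (f_lt (ltnW cn)); rewrite !fK //; last exact: ltnW.
by have := nf (p := c) (q := c.+1) cn; have := f_neq (ltnW cn); have := f_neq cn; lia.
Qed.

Lemma nonnesting_no_double_descent i : 0 < i -> i.+1 < n ->
  f i < f i.-1 -> f i.+1 < f i -> False.
Proof.
move=> i0 iS d1 d2.
have := @nonnesting_descent i.-1; rewrite prednK // => /(_ (ltnW iS) d1).
by have := nonnesting_descent iS d2; lia.
Qed.

End FixedPointFreeInvolution.

(** * Fixed-point-free involutions of S_n *)

(* [X] acting on [0, n) as natural numbers, extended by the identity.  Point
   [k] stands for [k + 1] of the paper, so [sref n i] swaps [i.-1] and [i]. *)
Definition nat_perm n (X : 'S_n) (k : nat) : nat :=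
  oapp (fun o : 'I_n => nat_of_ord (X o)) k (insub k).

Lemma nat_permE n (X : 'S_n) (o : 'I_n) : nat_perm X o = X o.
Proof. by rewrite /nat_perm valK. Qed.

Lemma nat_perm_Ordinal n (X : 'S_n) k (kn : k < n) : nat_perm X k = X (Ordinal kn).
Proof. by rewrite -nat_permE. Qed.

Lemma nat_perm_inj n (X Y : 'S_n) :
  (forall k, k < n -> nat_perm X k = nat_perm Y k) -> X = Y.
Proof. by move=> XY; apply/permP => o; apply: val_inj; rewrite /= -!nat_permE XY. Qed.

Section FixedPointFreeInvolutionPerm.
Variables (n : nat) (X : 'S_n).
Hypothesis hX : fpf_invol X.

Lemma fpf_involK : involutive X.
Proof. by case/andP: hX => /eqP XX _ o; rewrite -permM XX perm1. Qed.

Lemma nat_perm_lt k : k < n -> nat_perm X k < n.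
Proof. by move=> kn; rewrite (nat_perm_Ordinal X kn). Qed.

Lemma nat_permK k : k < n -> nat_perm X (nat_perm X k) = k.
Proof. by move=> kn; rewrite (nat_perm_Ordinal X kn) nat_permE fpf_involK. Qed.

Lemma nat_perm_neq k : k < n -> nat_perm X k <> k.
Proof.
move=> kn; rewrite (nat_perm_Ordinal X kn) => E.
by case/andP: hX => _ /forallP /(_ (Ordinal kn)); rewrite -val_eqE /= E eqxx.
Qed.

End FixedPointFreeInvolutionPerm.

Section AdjacentTransposition.
Local Open Scope group_scope.
Variables (n : nat) (c d : 'I_n).
Hypothesis cd : nat_of_ord d = c.+1.
Let t := tperm c d.

Lemma tperm_adjswap o : nat_of_ord (t o) = adjswap c o.
Proof.
have := adjswap_spec c o; rewrite /t.
case: tpermP => [->|->|oc od]; try lia.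
have oc' : nat_of_ord o <> c by move/ord_inj.
have od' : nat_of_ord o <> d by move/ord_inj.
lia.
Qed.

Definition inversions (u : 'S_n) :=
  [set p : 'I_n * 'I_n | (p.1 < p.2) && (u p.2 < u p.1)].

Lemma ell_tperm_mul (u : 'S_n) : u c < u d -> ell (t * u) = (ell u).+1.
Proof.
move=> lt_cd.
pose psi (p : 'I_n * 'I_n) := (t p.1, t p.2).
have psi_inj : injective psi.
  by move=> [p1 p2] [q1 q2] [] /(congr1 t) + /(congr1 t); rewrite /t !tpermK => -> ->.
pose A := [set p : 'I_n * 'I_n | (t p.1 < t p.2) && (u p.2 < u p.1)].
have -> : ell (t * u) = #|A|.
  rewrite /ell -(card_preimset _ psi_inj); apply: eq_card => p.
  by rewrite !inE /psi /= !permM /t !tpermK.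
pose K := [set p : 'I_n * 'I_n | (p.1 == c) && (p.2 == d) || (p.1 == d) && (p.2 == c)].
have AD : A :\: K = inversions u :\: K.
  apply/setP => -[p1 p2]; rewrite !inE /= -!val_eqE /= !tperm_adjswap.
  by have := adjswap_spec c p1; have := adjswap_spec c p2; lia.
have I0 : inversions u :&: K = set0.
  apply/setP => -[p1 p2]; rewrite !inE /=; apply/negP.
  case/andP=> /andP[lt12 lt_u] /orP[] /andP[/eqP E1 /eqP E2]; move: lt12 lt_u.
    by rewrite E1 E2; lia.
  by rewrite E1 E2 cd; lia.
have AK : A :&: K = [set (d, c)].
  apply/setP => -[p1 p2]; rewrite !inE /= xpair_eqE; apply/idP/idP.
    case/andP => /andP[lt_t _] /orP[] /andP[/eqP E1 /eqP E2]; rewrite E1 E2 ?eqxx //.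
    by move: lt_t; rewrite E1 E2 /t tpermL tpermR cd ltnNge leqnSn.
  case/andP => /eqP -> /eqP ->; rewrite /t tpermL tpermR cd ltnSn lt_cd.
  by rewrite !eqxx orbT.
rewrite -(cardsID K A) AD AK cards1 /ell -/(inversions u) -(cardsID K (inversions u)) I0.
by rewrite cards0.
Qed.

Lemma ell_mul_tperm (u : 'S_n) : u^-1 c < u^-1 d -> ell (u * t) = (ell u).+1.
Proof.
move=> lt_cd.
pose A := [set p : 'I_n * 'I_n | (p.1 < p.2) && (t (u p.2) < t (u p.1))].
have -> : ell (u * t) = #|A| by apply: eq_card => p; rewrite !inE !permM.
pose K := [set p : 'I_n * 'I_n |
  (u p.1 == c) && (u p.2 == d) || (u p.1 == d) && (u p.2 == c)].
have AD : A :\: K = inversions u :\: K.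
  apply/setP => -[p1 p2]; rewrite !inE /= -!val_eqE /= !tperm_adjswap.
  by have := adjswap_spec c (u p1); have := adjswap_spec c (u p2); lia.
have I0 : inversions u :&: K = set0.
  apply/setP => -[p1 p2]; rewrite !inE /=; apply/negP.
  case/andP=> /andP[lt12 lt_u] /orP[] /andP[/eqP E1 /eqP E2].
    by move: lt_u; rewrite E1 E2 cd; lia.
  by move: lt12 lt_cd; rewrite -E1 -E2 !permK; lia.
have AK : A :&: K = [set (u^-1 c, u^-1 d)].
  apply/setP => -[p1 p2]; rewrite !inE /= xpair_eqE.
  apply/idP/idP.
    case/andP => /andP[_ lt2] /orP[/andP[/eqP <- /eqP <-] | /andP[/eqP u1 /eqP u2]].
      by rewrite !permK !eqxx.
    by move: lt2; rewrite u1 u2 /t tpermL tpermR cd ltnNge leqnSn.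
  case/andP => /eqP -> /eqP ->; rewrite !permKV lt_cd /t tpermL tpermR cd ltnSn.
  by rewrite !eqxx.
rewrite -(cardsID K A) AD AK cards1 /ell -/(inversions u) -(cardsID K (inversions u)) I0.
by rewrite cards0.
Qed.

Lemma ell_conj_ascent (w : 'S_n) : fpf_invol w -> w c < w d ->
  ell (t * w * t) = (ell w).+2.
Proof.
move=> hw lt_cd.
have wV : w^-1 = w.
  by case/andP: hw => /eqP ww _; rewrite -[LHS]mul1g -ww -mulgA mulgV mulg1.
rewrite ell_mul_tperm ?ell_tperm_mul //.
rewrite invMg wV tpermV !permM !tperm_adjswap.
have := nat_perm_neq hw (ltn_ord c); have := nat_permK hw (ltn_ord d); rewrite !nat_permE.
have wd : nat_of_ord (w c) = d -> nat_of_ord (w d) = c.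
  by move/ord_inj <-; rewrite fpf_involK.
by have := adjswap_spec c (w c); have := adjswap_spec c (w d); lia.
Qed.

End AdjacentTransposition.

Section Conjugation.
Local Open Scope group_scope.

Lemma fpf_invol_conj n (t z : 'S_n) : fpf_invol z -> fpf_invol (t * z * t^-1).
Proof.
case/andP => /eqP zz /forallP z_neq; apply/andP; split.
  apply/eqP; rewrite -!mulgA (mulgA t^-1) mulVg mul1g (mulgA z) zz mul1g.
  by rewrite mulgV.
apply/forallP => k; rewrite !permM; apply/negP => /eqP E.
by have := z_neq (t k); rewrite -{2}E permKV eqxx.
Qed.

Lemma conjF_val n (t : 'S_n) z : val (conjF t z) = t * val z * t^-1.
Proof. by rewrite /conjF insubdK // /in_mem /= fpf_invol_conj // (valP z). Qed.

Lemma sref_invol n i : sref n i * sref n i = 1.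
Proof. by case: n => [|m] /=; rewrite ?mulg1 ?tperm2. Qed.

Lemma sref_V n i : (sref n i)^-1 = sref n i.
Proof. by rewrite -[LHS]mul1g -(sref_invol n i) -mulgA mulgV mulg1. Qed.

Lemma conjF_srefK n i : involutive (@conjF n (sref n i)).
Proof.
move=> z; apply: val_inj; rewrite !conjF_val sref_V.
by rewrite !mulgA sref_invol mul1g -mulgA sref_invol mulg1.
Qed.

End Conjugation.

Definition ellF n (w : F n) : nat := ell (val w).

Lemma bruhat_le_ellF n (a b : F n) : bruhat_le a b -> ellF a <= ellF b.
Proof.
move/connectP => [p]; elim: p a => [|c p IH] a /=; first by move=> _ ->.
case/andP => /existsP [t /and3P [_ _ le]] pt lst.
exact: leq_trans le (IH c pt lst).
Qed.

Lemma sref_is_transposition n i : 0 < i < n -> is_transposition (sref n i).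
Proof.
case: n => [|m] /andP[i0 im] //=.
apply/existsP; exists (inord i.-1); apply/existsP; exists (inord i).
rewrite eqxx andbT; apply/eqP => /(congr1 (@nat_of_ord _)).
by rewrite !inordK; lia.
Qed.

Lemma srefE n i : 0 < i < n -> exists c d : 'I_n,
  [/\ sref n i = tperm c d, nat_of_ord c = i.-1 & nat_of_ord d = i].
Proof.
case: n => [|m] /andP[i0 im] //.
by exists (inord i.-1), (inord i); split; rewrite // inordK //; lia.
Qed.

Lemma nat_perm_conjF n (x : F n) i k : 0 < i < n -> k < n ->
  nat_perm (val (conjF (sref n i) x)) k = adjswap i.-1 (nat_perm (val x) (adjswap i.-1 k)).
Proof.
move=> hi kn; have [c [d [-> hc hd]]] := srefE hi.
have cd : nat_of_ord d = c.+1 by lia.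
rewrite conjF_val tpermV (nat_perm_Ordinal _ kn) !permM !tperm_adjswap //.
by rewrite -nat_permE tperm_adjswap // hc.
Qed.

Section SimpleReflection.
Variables (n i : nat).
Hypothesis hi : 0 < i < n.
Let s := sref n i.

Lemma ellF_conj_ascent (x : F n) :
  nat_perm (val x) i.-1 < nat_perm (val x) i -> ellF (conjF s x) = (ellF x).+2.
Proof.
have [c [d [E hc hd]]] := srefE hi.
have cd : nat_of_ord d = c.+1 by lia.
rewrite -hc -hd !nat_permE => lt.
by rewrite /ellF conjF_val /s sref_V E ell_conj_ascent // (valP x).
Qed.

Lemma conjF_sref_trichotomy (x : F n) : let f := nat_perm (val x) in
  [\/ f i.-1 < f i /\ ellF (conjF s x) = (ellF x).+2,
      f i.-1 = i /\ conjF s x = x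
    | f i < f i.-1 /\ ellF x = (ellF (conjF s x)).+2].
Proof.
move=> f; have Ei : i.-1.+1 = i by lia.
have cn : i.-1.+1 < n by lia.
have fK := nat_permK (valP x); have f_lt := nat_perm_lt (val x).
have := adj_trichotomy cn fK; rewrite Ei => -[lt|[fx|[dc nfix]]].
- by apply: Or31; split => //; apply: ellF_conj_ascent.
- apply: Or32; split => //; apply: val_inj; apply: nat_perm_inj => k kn.
  by rewrite nat_perm_conjF // (adjswap_conj_fixed cn fK f_lt) ?Ei.
- apply: Or33; split=> //; rewrite -{1}(conjF_srefK i x); apply: ellF_conj_ascent.
  have := adjswap_conj_descent cn fK (nat_perm_neq (valP x)); rewrite Ei.
  by move=> /(_ dc nfix); rewrite /s !nat_perm_conjF //; lia.
Qed.

Lemma ellF_conjF_sref (w : F n) :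
  [\/ conjF s w = w, ellF (conjF s w) = (ellF w).+2 | ellF w = (ellF (conjF s w)).+2].
Proof. by case: (conjF_sref_trichotomy w) => [[_ ->]|[_ ->]|[_ ->]]; constructor. Qed.

Lemma tau_ellF (x : F n) : tau x i = (conjF s x == x) || (ellF (conjF s x) < ellF x).
Proof.
rewrite /tau -/s; move: (hi) => /andP[-> ->] /=.
have [->|NE] /= := eqVneq (conjF s x) x; first exact: connect0.
apply/idP/idP => [/bruhat_le_ellF le|lt].
  by case: (ellF_conjF_sref x) => E; [move: NE; rewrite E eqxx | lia | lia].
apply/connect1/existsP; exists s; rewrite sref_is_transposition //=.
rewrite conjF_val /s sref_V !mulgA sref_invol mul1g -mulgA sref_invol mulg1 eqxx /=.
by move: lt; rewrite /ellF conjF_val sref_V; apply: ltnW.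
Qed.

Lemma tau_descent (x : F n) : tau x i = (nat_perm (val x) i < nat_perm (val x) i.-1).
Proof.
rewrite tau_ellF; case: (conjF_sref_trichotomy x) => [[lt El]|[fx ->]|[dc ->]].
- have Nx : conjF s x != x by apply/eqP => E; move: El; rewrite E; lia.
  have -> : (ellF (conjF s x) < ellF x) = false by rewrite El; lia.
  by rewrite (negbTE Nx) ltnNge ltnW.
- have lt_n : i.-1 < n by lia.
  have := nat_permK (valP x) lt_n; rewrite fx => ->.
  by rewrite eqxx; lia.
- by rewrite ltnS leqnSn orbT dc.
Qed.

End SimpleReflection.

Lemma z0fun_lt m k : k < m.*2 -> z0fun k < m.*2.
Proof.
rewrite /z0fun; case: ifP => ok kl; first lia.
have : k.+1 != m.*2 by apply/eqP => E; move: (congr1 odd E); rewrite /= ok odd_double.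
lia.
Qed.

Lemma nat_perm_prod_sref_odd n m k (kn : k < n) : m.*2 <= n ->
  nat_of_ord ((\prod_(0 <= i < m.*2 | odd i) sref n i)%g (Ordinal kn)) =
  if k < m.*2 then z0fun k else k.
Proof.
elim: m => [|m IH] hm; first by rewrite big_geq // perm1.
rewrite doubleS in hm *.
rewrite big_mkcond big_nat_recr //= big_nat_recr //= -big_mkcond /=.
rewrite odd_double /= mulg1.
have hi : 0 < (m.*2).+1 < n by lia.
have [c [d [E hc hd]]] := srefE hi.
have cd : nat_of_ord d = c.+1 by lia.
rewrite permM E tperm_adjswap // IH; last lia.
rewrite hc /=.
have z1 : z0fun m.*2 = (m.*2).+1 by rewrite /z0fun odd_double.
have z2 : z0fun (m.*2).+1 = m.*2 by rewrite /z0fun /= odd_double.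
case: (ltnP k m.*2) => hk.
  have := z0fun_lt hk; have := adjswap_spec m.*2 (z0fun k).
  by case: ifP; lia.
have i1 : k = m.*2 -> z0fun k = (m.*2).+1 by move->.
have i2 : k = (m.*2).+1 -> z0fun k = m.*2 by move->.
by have := adjswap_spec m.*2 k; case: ifP; lia.
Qed.

Lemma nat_perm_z0perm n k : ~~ odd n -> k < n -> nat_perm (z0perm n) k = z0fun k.
Proof.
move=> n_even kn.
have En : n = (n./2).*2 by rewrite -{1}(odd_double_half n) (negbTE n_even).
rewrite (nat_perm_Ordinal _ kn) /z0perm -big_mkord.
have := @nat_perm_prod_sref_odd n n./2 k kn; rewrite -En kn.
by move=> /(_ (leqnn n)) <-.
Qed.

Definition nonnesting_F n (w : F n) : Prop := nonnesting n (nat_perm (val w)).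

Lemma nonnesting_z0perm n (z : F n) : ~~ odd n -> val z = z0perm n -> nonnesting_F z.
Proof.
move=> n_even Ez p q qn pq; rewrite Ez !nat_perm_z0perm //; last lia.
exact: nonnesting_z0fun.
Qed.

(* If no simple reflection shortens [u], every adjacent pair is an ascent or an
   arc of [u], and only [s_1 s_3 ... s_(n-1)] has this property. *)
Lemma exists_ellF_descent n (u : F n) : ~~ odd n -> val u <> z0perm n ->
  exists2 i, 0 < i < n & (ellF (conjF (sref n i) u)).+2 = ellF u.
Proof.
move=> n_even Nz.
have [/existsP [i /andP [i0 /eqP E]]|no_desc] :=
  boolP [exists i : 'I_n, (0 < i) && ((ellF (conjF (sref n i) u)).+2 == ellF u)].
  by exists i; rewrite ?i0 ?ltn_ord.
case: Nz; apply: nat_perm_inj => k kn; rewrite nat_perm_z0perm //.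
apply: (eq_z0fun_no_descent (nat_permK (valP u)) (nat_perm_lt _) (nat_perm_neq (valP u))) => // c cn.
have hc : 0 < c.+1 < n by lia.
case: (conjF_sref_trichotomy hc u) => /= [[lt _]|[fx _]|[_ El]].
- by left.
- by right.
- by move/negP: no_desc; case; apply/existsP; exists (Ordinal cn); rewrite /= El eqxx.
Qed.

Lemma tau_range n (x : F n) i : tau x i -> 0 < i < n.
Proof. by case/and3P => -> ->. Qed.

Lemma descent_of_tau n (x : F n) i :
  tau x i -> nat_perm (val x) i < nat_perm (val x) i.-1.
Proof. by move=> ti; rewrite -(tau_descent (tau_range ti)). Qed.

Lemma ascent_of_ntau n (x : F n) i : 0 < i < n -> ~~ tau x i ->
  nat_perm (val x) i.-1 < nat_perm (val x) i.
Proof.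
move=> hi; rewrite (tau_descent hi) -leqNgt leq_eqVlt => /orP[/eqP E|//].
by have := invol_inj (nat_permK (valP x)) _ _ E; lia.
Qed.

Lemma ntau_subsetP n (x y : F n) : ~~ tau_subset x y ->
  exists i : 'I_n, tau x i && ~~ tau y i.
Proof. by rewrite negb_forall => /existsP [i]; rewrite negb_imply; exists i. Qed.

(** * The bar involution and the canonical basis *)

Definition mzero n : module n := fun _ => lzero.

Fixpoint msum n (l : seq (F n)) (h : F n -> module n) : module n :=
  if l is u :: l' then madd (h u) (msum l' h) else @mzero n.

Lemma msumE n (l : seq (F n)) h w k : msum l h w k = (\sum_(u <- l) h u w k)%R.
Proof.
elim: l => [|u l IH] /=; first by rewrite big_nil /mzero lzeroE.
by rewrite big_cons /madd laddE IH.
Qed.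

Lemma module_ext n (a b : module n) : (forall w k, a w k = b w k) -> a = b.
Proof. by move=> ab; apply: functional_extensionality => w; apply/fsfunP; apply: ab. Qed.

Lemma module_decomp n (m : module n) :
  m = msum (enum {: F n}) (fun u => mscale (m u) (Mbasis u)).
Proof.
apply: module_ext => w k; rewrite msumE (bigD1_seq w) ?mem_enum ?enum_uniq //=.
rewrite /mscale /Mbasis eqxx lmulr1E big1 ?addr0 // => u /negbTE uw.
by rewrite eq_sym uw lmulr0E.
Qed.

Lemma conjF_sref_eq n i (w x : F n) :
  (conjF (sref n i) w == x) = (w == conjF (sref n i) x).
Proof. by apply/eqP/eqP => [<-|->]; rewrite conjF_srefK. Qed.

Lemma Hact_Mbasis_ascent n i (x : F n) : (ellF x).+2 = ellF (conjF (sref n i) x) ->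
  Hact (sref n i) (Mbasis x) = Mbasis (conjF (sref n i) x).
Proof.
set s := sref n i; set u := conjF s x => hl.
have xu : conjF s u = x by rewrite conjF_srefK.
apply: module_ext => w k; rewrite /Hact /Mbasis.
case: eqP => [Ew|Nw].
  have wx : w != x by apply/eqP => E; move: hl; rewrite /u -E Ew; lia.
  have wu : w != u.
    by apply/eqP => E; move: Ew; rewrite E xu => xu'; move: hl; rewrite xu'; lia.
  by rewrite (negbTE wx) (negbTE wu) lmul_lmonoE !lzeroE mulr0.
rewrite conjF_sref_eq -/s -/u; case: ifP => // lt.
have wx : w != x by apply/eqP => E; move: lt hl; rewrite E /ellF -/u; lia.
by rewrite (negbTE wx) laddE lmulr0E addr0.
Qed.

Definition Hsubv n (s : 'S_n) (m : module n) : module n :=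
  madd (Hact s m) (mscale (lopp (lmono 1 1)) m).

Section HsubvCoefficients.
Local Open Scope ring_scope.
Variables (n : nat) (s : 'S_n) (m : module n) (w : F n) (k : int).

Lemma Hsubv_fixE : conjF s w = w -> Hsubv s m w k = 0.
Proof.
move=> Ew; rewrite /Hsubv /madd /mscale /Hact laddE Ew eqxx.
by rewrite lmul_loppE !lmul_lmonoE subrr.
Qed.

Lemma Hsubv_descE : conjF s w != w -> (ellF (conjF s w) < ellF w)%N ->
  Hsubv s m w k = m (conjF s w) k - m w (k + 1).
Proof.
move=> Nw lt; rewrite /Hsubv /madd /mscale /Hact laddE (negbTE Nw).
rewrite /ellF in lt; rewrite lt laddE lmul_vmvinvE lmul_loppE lmul_lmonoE mul1r.
ring.
Qed.

Lemma Hsubv_ascE : conjF s w != w -> ~~ (ellF (conjF s w) < ellF w)%N ->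
  Hsubv s m w k = m (conjF s w) k - m w (k - 1).
Proof.
move=> Nw lt; rewrite /Hsubv /madd /mscale /Hact laddE (negbTE Nw).
by rewrite /ellF in lt; rewrite (negbTE lt) lmul_loppE lmul_lmonoE mul1r.
Qed.

End HsubvCoefficients.

Section BarInvolution.
Variables (n : nat) (B : module n -> module n).
Hypothesis hB : is_bar_involution B.
Hypothesis n_even : ~~ odd n.

Lemma bar_mzero : B (@mzero n) = @mzero n.
Proof.
case: hB => _ hs _ _.
have E (a : module n) : mscale lzero a = @mzero n.
  by apply: module_ext => w k; rewrite /mscale lmul0E /mzero lzeroE.
by rewrite -(E (@mzero n)) hs lbar0 E.
Qed.

Lemma bar_msum l h : B (msum l h) = msum l (fun u => B (h u)).
Proof.
case: hB => ha _ _ _.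
by elim: l => [|u l IH] /=; [apply: bar_mzero | rewrite ha IH].
Qed.

(* Induction on the length: [M_u = H_s M_(sus)] for a descent [s] of [u], and
   [s_1 s_3 ... s_(n-1)] is the only element without descents. *)
Lemma bar_Mbasis_triangular (u : F n) : B (Mbasis u) u = lone /\
  forall w, w != u -> ellF u <= ellF w -> B (Mbasis u) w = lzero.
Proof.
case: (hB) => _ _ hh h0.
elim: {u}(ellF u).+1 {-2}u (ltnSn (ellF u)) => [//|N IH] u hu.
have [Ez|Nz] := eqVneq (val u) (z0perm n).
  by rewrite (h0 u Ez) /Mbasis eqxx; split => // w /negbTE ->.
have [i hi hl] := exists_ellF_descent n_even (elimN eqP Nz).
set s := sref n i in hl; set x := conjF s u in hl.
have ux : u = conjF s x by rewrite /x conjF_srefK.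
have xN : ellF x < N by lia.
have [IH1 IH2] := IH x xN.
have -> : Mbasis u = Hact s (Mbasis x) by rewrite ux Hact_Mbasis_ascent // -ux.
rewrite (hh i _ hi); set m := B (Mbasis x) in IH1 IH2 *.
have xu : x != u by apply/eqP => E; move: hl; rewrite E; lia.
have m_u : m u = lzero by apply: IH2; [rewrite eq_sym | lia].
split.
  apply/fsfunP => k; rewrite /Hinvact /madd /mscale laddE /Hact -/x (negbTE xu).
  have -> : ell (val x) < ell (val u) by rewrite /ellF in hl; lia.
  by rewrite laddE IH1 m_u !lmulr0E !addr0.
move=> w wu hw.
have wx : w != x by apply/eqP => E; move: hw; rewrite E; lia.
have m_w : m w = lzero by apply: IH2 => //; lia.
have m_sws : m (conjF s w) = lzero.
  apply: IH2; first by rewrite conjF_sref_eq -ux.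
  by have := ellF_conjF_sref hi w; rewrite -/s => -[->|E|E]; lia.
apply/fsfunP => k.
rewrite /Hinvact /madd /mscale laddE /Hact m_w m_sws lmulr0E lzeroE addr0.
case: ifP => _; first by rewrite lmulr0E.
case: ifP => _; last by rewrite lzeroE.
by rewrite laddE lmulr0E lzeroE.
Qed.

Lemma bar_invariant_top_sym (m : module n) (w : F n) : B m = m ->
  (forall u, ellF w < ellF u -> m u = lzero) -> forall k, m w (- k)%R = m w k.
Proof.
move=> Bm top k; case: hB => _ hs _ _.
have := congr1 (fun a : module n => a w k) Bm.
rewrite {1}(module_decomp m) bar_msum msumE => <-.
rewrite (bigD1_seq w) ?mem_enum ?enum_uniq //=.
rewrite hs /mscale (proj1 (bar_Mbasis_triangular w)) lmulr1E lbarE big1 ?addr0 // => u uw.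
rewrite hs /mscale; case: (ltnP (ellF w) (ellF u)) => lt.
  by rewrite top // lbar0 lmul0E.
by rewrite (proj2 (bar_Mbasis_triangular u)) ?lmulr0E // eq_sym.
Qed.

(* The coefficients at an element of maximal length are symmetric under
   [v |-> v^-1]; if they have no terms of nonnegative degree, they vanish. *)
Lemma bar_invariant_eq0 (m : module n) : B m = m ->
  (forall w, (forall u, ellF w < ellF u -> m u = lzero) ->
     forall k, (0 <= k)%R -> m w k = 0%R) ->
  forall w, m w = lzero.
Proof.
move=> Bm pos w0; apply/eqP/negPn/negP => nz.
have [w nzw wmax] := @arg_maxnP _ w0 (fun w => m w != lzero) (@ellF n) nz.
have top u : ellF w < ellF u -> m u = lzero.
  by move=> lt; apply/eqP/negPn/negP => nzu; have := wmax u nzu; lia.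
move/eqP: nzw; apply; apply/fsfunP => k; rewrite lzeroE.
have [k0|k0] := lerP 0%R k; first exact: pos.
by rewrite -(bar_invariant_top_sym Bm top) pos // oppr_ge0 ltW.
Qed.

Lemma bar_Hsubv i (m : module n) : 0 < i < n -> B m = m ->
  B (Hsubv (sref n i) m) = Hsubv (sref n i) m.
Proof.
move=> hi Bm; case: (hB) => ha hs hh _.
rewrite /Hsubv ha hs (hh i _ hi) Bm lbar_lopp_lmono.
apply: module_ext => w k; rewrite /Hinvact /madd /mscale !laddE.
rewrite !lmul_loppE lmul_vmvinvE !lmul_lmonoE !mul1r opprK.
by rewrite addrC; ring.
Qed.

Section CanonicalBasis.
Variable C : F n -> module n.
Hypothesis hC : is_canonical_basis B C.

Lemma canonical_coef_nonneg y w k : w != y -> (0 <= k)%R -> C y w k = 0%R.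
Proof.
move=> wy k0; have [_ _ /(_ w wy)] := hC y.
by case=> [[_ ->]|->] //; rewrite lzeroE.
Qed.

Lemma Hsubv_canonical_eq0 i y : 0 < i < n -> tau y i ->
  forall w, Hsubv (sref n i) (C y) w = lzero.
Proof.
move=> hi ty; set s := sref n i; set c := C y.
have [Bc cyy _] := hC y.
have le_y : ellF (conjF s y) <= ellF y by case/and3P: ty => _ _ /bruhat_le_ellF.
apply: bar_invariant_eq0 (bar_Hsubv hi Bc) _ => w top k k0.
have [Ew|Nw] := eqVneq (conjF s w) w; first exact: Hsubv_fixE.
have [lt|ge] := boolP (ellF (conjF s w) < ellF w).
  rewrite Hsubv_descE //.
  have -> : c w (k + 1)%R = 0%R.
    have [->|wy] := eqVneq w y; last by apply: canonical_coef_nonneg => //; lia.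
    by rewrite /c cyy loneE; case: eqP => //; lia.
  have -> : c (conjF s w) k = 0%R.
    apply: canonical_coef_nonneg => //; rewrite conjF_sref_eq; apply/eqP => E.
    by move: lt le_y; rewrite E -/s conjF_srefK; lia.
  by rewrite subrr.
have up : ellF w < ellF (conjF s w).
  have := ellF_conjF_sref hi w; rewrite -/s => -[E|E|E]; try lia.
  by move: Nw; rewrite E eqxx.
have := top _ up => /(congr1 (fun f : laurent => f (k - 1)%R)).
rewrite lzeroE Hsubv_descE ?conjF_srefK 1?eq_sym // Hsubv_ascE // subrK.
by move=> E; rewrite -opprB E oppr0.
Qed.

Lemma canonical_mu_conjF i x y : 0 < i < n -> tau y i -> ~~ tau x i ->
  mu C x y != 0%R -> y = conjF (sref n i) x.
Proof.
move=> hi ty; rewrite (tau_ellF hi) negb_or => /andP[Nx asc] mxy.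
have := Hsubv_ascE (C y) 0 Nx asc; rewrite Hsubv_canonical_eq0 // lzeroE sub0r.
move/eqP; rewrite eq_sym subr_eq0 => /eqP E.
apply/eqP; rewrite eq_sym; apply: contraR mxy => Ny.
by rewrite /mu -E canonical_coef_nonneg.
Qed.

Lemma nonnesting_bidirected a b : bidirected C a b -> nonnesting_F a -> nonnesting_F b.
Proof.
rewrite /bidirected /omega; case: ifP => [nsab|_]; last by rewrite eqxx.
case: ifP => [nsba|_]; last by rewrite andbF.
case/andP=> mab_mba _ Pa.
have fKa := nat_permK (valP a); have fKb := nat_permK (valP b).
have [mab|mba] : mu C a b != 0%R \/ mu C b a != 0%R.
  by case: (eqVneq (mu C a b) 0%R) mab_mba => [->|]; [rewrite add0r; right | left].
- have [i /andP[]] := ntau_subsetP nsba; have := @tau_range _ b i.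
  case: (nat_of_ord i) => [|c] hi tb nta; first by have := hi tb.
  have {}hi := hi tb; have cn : c.+1 < n by lia.
  have Eb := canonical_mu_conjF hi tb nta mab.
  have hf k : k < n -> nat_perm (val b) k = adjswap c (nat_perm (val a) (adjswap c k)).
    by move=> kn; rewrite Eb nat_perm_conjF.
  have [j /andP[ta ntb]] := ntau_subsetP nsab.
  have := tau_range ta; case: (nat_of_ord j) ta ntb => [|e] ta ntb hj //.
  have en : e.+1 < n by case/andP: hj.
  exact: (nonnesting_conj_ascent cn hf fKa (nat_perm_lt _) (nat_perm_neq (valP a))
            (ascent_of_ntau hi nta) Pa en (descent_of_tau ta) (ascent_of_ntau hj ntb)).
- have [i /andP[]] := ntau_subsetP nsab; have := @tau_range _ a i.
  case: (nat_of_ord i) => [|c] hi ta ntb; first by have := hi ta.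
  have {}hi := hi ta; have cn : c.+1 < n by lia.
  have Ea := canonical_mu_conjF hi ta ntb mba.
  have hf k : k < n -> nat_perm (val a) k = adjswap c (nat_perm (val b) (adjswap c k)).
    by move=> kn; rewrite Ea nat_perm_conjF.
  exact: (nonnesting_adjswap_conj_ascent cn hf fKb (ascent_of_ntau hi ntb) Pa).
Qed.

End CanonicalBasis.
End BarInvolution.

Theorem lemma7p2 (n : nat) (n_even : ~~ odd n) (n_ge2 : (2 <= n)%N)
    (B : module n -> module n) (hB : is_bar_involution B)
    (C : F n -> module n) (hC : is_canonical_basis B C)
    (x : F n) (hx : in_C1 C x) (i : nat) (hi : (1 <= i <= n - 2)%N) :
  ~ (tau x i /\ tau x i.+1).
Proof.
have Px : nonnesting_F x.
  case: hx => z [/(nonnesting_z0perm n_even) Pz /connectP [p pth ->]].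
  elim: p z Pz pth => [//|a p IH] z Pz /= /andP[za pth].
  exact: IH a (nonnesting_bidirected hB n_even hC za Pz) pth.
case=> t1 t2.
apply: (nonnesting_no_double_descent (nat_permK (valP x)) (nat_perm_lt _)
          (nat_perm_neq (valP x)) Px _ _ (descent_of_tau t1) (descent_of_tau t2)); lia.
Qed.
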